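(* Let $f:E\to X$ be a fibrewise pointed map between fibrewise well-pointed spaces over $B$, and assume that either $E$ and $X$ are normal spaces, or $f$ is a closed fibrewise cofibration and $X$ is normal. Then $$\mathrm{secat}_B(f)\le\mathrm{secat}^B_B(f)\le\mathrm{secat}_B(f)+1.$$
   Context: Fibrewise space over $B$: a space $X$ with a map $p_X:X\to B$; fibrewise map: $f$ with $p_Yf=p_X$. Fibrewise pointed space: fibrewise space with a section $s_X:B\to X$ of $p_X$; fibrewise pointed map: fibrewise map with $fs_X=s_Y$. The fibrewise cylinder $I_B(X)$ is $X\times[0,1]$ with projection $(x,t)\mapsto p_X(x)$; a fibrewise homotopy is a fibrewise map $I_B(X)\to Y$ ($\simeq_B$). A fibrewise pointed homotopy between fibrewise pointed maps is a fibrewise homotopy $H$ with $H(s_X(b),t)=s_Y(b)$ for all $b,t$ ($\simeq^B_B$). A fibrewise map $j:A\to X$ is a fibrewise cofibration if it has the homotopy extension property for fibrewise homotopies (for all fibrewise $g:X\to Y$, $H:I_B(A)\to Y$ with $H(-,0)=gj$ there is $\tilde H:I_B(X)\to Y$ with $\tilde H(-,0)=g$, $\tilde H\circ(j\times\mathrm{id})=H$); it is closed if $j(A)$ is closed. $X$ is fibrewise well-pointed if $s_X$ is a closed fibrewise cofibration. $\mathrm{secat}_B(f)$: least $n$ such that $X$ is covered by $n+1$ open sets $U$ each with a fibrewise map $s:U\to E$ with $fs\simeq_B$ the inclusion $U\hookrightarrow X$. $\mathrm{secat}^B_B(f)$: least $n$ such that $X$ is covered by $n+1$ open sets $U$, each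 containing $s_X(B)$ (so a fibrewise pointed space with section $s_X$) and each admitting a fibrewise pointed map $s:U\to E$ with $fs\simeq^B_B$ the inclusion $U\hookrightarrow X$. Both are $\infty$ if no such $n$ exists. *)

From HB Require Import structures.
From mathcomp Require Import all_boot all_order all_algebra.
From mathcomp Require Import all_classical all_reals all_analysis.
From mathcomp Require Import Rstruct Rstruct_topology.
Set Implicit Arguments. Unset Strict Implicit. Unset Printing Implicit Defensive.
Import Order.TTheory GRing.Theory Num.Theory.
Local Open Scope classical_set_scope.
Local Open Scope ring_scope.

Definition unitI : set Rdefinitions.R := `[0, 1]%classic.

Section Fibrewise.
Variable B : topologicalType.

Definition fib_space (X : topologicalType) (pX : X -> B) : Prop := continuous pX.

Definition fib_pointed_space (X : topologicalType) (pX : X -> B) (sX : B -> X) : Prop :=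
  continuous pX /\ continuous sX /\ (forall b, pX (sX b) = b).

Definition fib_map (X Y : topologicalType) (pX : X -> B) (pY : Y -> B) (g : X -> Y) :=
  continuous g /\ (forall x, pY (g x) = pX x).

(* Fibrewise cofibration: homotopy extension property for fibrewise homotopies
   I_B(A) = A x [0,1] -> Y, for every fibrewise space Y over B. *)
Definition fib_cofibration (A X : topologicalType) (pA : A -> B) (pX : X -> B)
    (j : A -> X) : Prop :=
  fib_map pA pX j /\
  forall (Y : topologicalType) (pY : Y -> B), fib_space pY ->
  forall (g : X -> Y), fib_map pX pY g ->
  forall (H : A * Rdefinitions.R -> Y),
    {within [set: A] `*` unitI, continuous H} ->
    (forall a t, unitI t -> pY (H (a, t)) = pA a) ->
    (forall a, H (a, 0) = g (j a)) ->
  exists Ht : X * Rdefinitions.R -> Y,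
    [/\ {within [set: X] `*` unitI, continuous Ht},
        (forall x t, unitI t -> pY (Ht (x, t)) = pX x),
        (forall x, Ht (x, 0) = g x) &
        (forall a t, unitI t -> Ht (j a, t) = H (a, t))].

Definition closed_fib_cofibration (A X : topologicalType) (pA : A -> B)
    (pX : X -> B) (j : A -> X) : Prop :=
  fib_cofibration pA pX j /\ closed (range j).

(* X is fibrewise well-pointed: the section is a closed fibrewise cofibration,
   B being regarded as a fibrewise space over itself via the identity. *)
Definition fib_well_pointed (X : topologicalType) (pX : X -> B) (sX : B -> X) :=
  closed_fib_cofibration id pX sX.

(* Fibrewise map s : U -> E on an (open) subset U of X, given as a total
   function whose values outside U are irrelevant. *)
Definition fib_map_on (X E : topologicalType) (pX : X -> B) (pE : E -> B)
    (U : set X) (s : X -> E) : Prop :=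
  {within U, continuous s} /\ (forall x, U x -> pE (s x) = pX x).

Definition fib_homotopic_incl_on (X E : topologicalType) (pX : X -> B)
    (f : E -> X) (U : set X) (s : X -> E) (H : X * Rdefinitions.R -> X) : Prop :=
  [/\ {within U `*` unitI, continuous H},
      (forall x t, U x -> unitI t -> pX (H (x, t)) = pX x),
      (forall x, U x -> H (x, 0) = f (s x)) &
      (forall x, U x -> H (x, 1) = x)].

Definition secatB_le (E X : topologicalType) (pE : E -> B) (pX : X -> B)
    (f : E -> X) (n : nat) : Prop :=
  exists U : nat -> set X,
    [/\ (forall i, (i <= n)%N -> open (U i)),
        (forall x, exists2 i, (i <= n)%N & U i x) &
        (forall i, (i <= n)%N -> exists s : X -> E,
           fib_map_on pX pE (U i) s /\
           exists H, fib_homotopic_incl_on pX f (U i) s H)].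

Definition secatBB_le (E X : topologicalType) (pE : E -> B) (pX : X -> B)
    (sE : B -> E) (sX : B -> X) (f : E -> X) (n : nat) : Prop :=
  exists U : nat -> set X,
    [/\ (forall i, (i <= n)%N -> open (U i)),
        (forall x, exists2 i, (i <= n)%N & U i x),
        (forall i, (i <= n)%N -> forall b, U i (sX b)) &
        (forall i, (i <= n)%N -> exists s : X -> E,
           [/\ fib_map_on pX pE (U i) s,
               (forall b, s (sX b) = sE b) &
               exists H, fib_homotopic_incl_on pX f (U i) s H /\
                 (forall b t, unitI t -> H (sX b, t) = sX b)])].

End Fibrewise.

(* Extended natural numbers: None stands for infinity. *)
Definition enat_le (a b : option nat) : Prop :=
  match a, b with
  | _, None => True
  | None, Some _ => False
  | Some m, Some n => (m <= n)%N
  end.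

Definition enat_succ (a : option nat) : option nat := omap S a.

Definition least_nat (P : nat -> Prop) : option nat :=
  match pselect (exists n, `[< P n >]) with
  | left h => Some (ex_minn h)
  | right _ => None
  end.

Definition secatB (B E X : topologicalType) (pE : E -> B) (pX : X -> B)
    (f : E -> X) : option nat := least_nat (secatB_le pE pX f).

Definition secatBB (B E X : topologicalType) (pE : E -> B) (pX : X -> B)
    (sE : B -> E) (sX : B -> X) (f : E -> X) : option nat :=
  least_nat (secatBB_le pE pX sE sX f).

(* The first inequality is immediate: a pointed local section is a local
   section.  For the second, well-pointedness of X makes the section s_X(B)
   a fibrewise deformation retract of an open neighbourhood N (via the
   retraction of X x [0,1] onto X x 0 u s_X(B) x [0,1] given by the
   homotopy extension property).  Normality of X gives an open M with
   s_X(B) in M and closure M inside N.  Each open set U of a sectional cover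
   is replaced by (U \ closure M) u M, where the section and homotopy are
   patched with s_E p_X and the deformation on M; this makes them pointed.
   Adding N itself, with the same data, gives a pointed cover with one more
   open set. *)

From HB Require Import structures.
From mathcomp Require Import all_boot all_order all_algebra.
From mathcomp Require Import all_classical all_reals all_analysis.
From mathcomp Require Import Rstruct Rstruct_topology.
From mathcomp Require Import lra.

Set Implicit Arguments. Unset Strict Implicit. Unset Printing Implicit Defensive.
Import Order.TTheory GRing.Theory Num.Theory.
Local Open Scope classical_set_scope.
Local Open Scope ring_scope.

Local Notation R := Rdefinitions.R.

Lemma continuous_fst (T U : topologicalType) : continuous (@fst T U).
Proof. by move=> p; exact: cvg_fst. Qed.

Lemma continuous_snd (T U : topologicalType) : continuous (@snd T U).
Proof. by move=> p; exact: cvg_snd. Qed.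

Lemma continuous_pair (T U V : topologicalType) (f : T -> U) (g : T -> V) :
  continuous f -> continuous g -> continuous (fun x => (f x, g x)).
Proof. by move=> cf cg x; apply: cvg_pair; [exact: cf | exact: cg]. Qed.

Lemma continuous_comp_fun (T U V : topologicalType) (f : T -> U) (g : U -> V) :
  continuous f -> continuous g -> continuous (g \o f).
Proof. by move=> cf cg x; exact: continuous_comp (cf x) (cg (f x)). Qed.

Lemma continuous_oneminus : continuous (fun t : R => 1 - t).
Proof.
move=> t; apply: (@continuousB _ R^o _ (fun=> 1) id).
  exact: cst_continuous.
exact: cvg_id.
Qed.

Lemma within_continuous_comp (T1 T2 T3 : topologicalType) (S : set T1)
    (A : set T2) (phi : T1 -> T2) (h : T2 -> T3) :
  {within S, continuous phi} -> (forall x, S x -> A (phi x)) ->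
  {within A, continuous h} -> {within S, continuous (h \o phi)}.
Proof.
move=> /subspace_continuousP cphi SA /subspace_continuousP ch.
apply/subspace_continuousP => x Sx.
apply: cvg_comp (ch _ (SA x Sx)) => W nW.
have : nbhs x (fun y => S y -> A (phi y) -> W (phi y)) := cphi x Sx _ nW.
by apply: filterS => y Wy Sy; exact: Wy Sy (SA y Sy).
Qed.

Lemma within_continuousU_open (T U : topologicalType) (S O1 O2 : set T)
    (f : T -> U) :
  open O1 -> open O2 ->
  {within S `&` O1, continuous f} -> {within S `&` O2, continuous f} ->
  {within S `&` (O1 `|` O2), continuous f}.
Proof.
have glue O : open O -> {within S `&` O, continuous f} ->
    forall x, S x -> O x -> f y @[y --> within (S `&` (O1 `|` O2)) (nbhs x)]
                             --> f x.
  move=> oO /subspace_continuousP cO x Sx Ox V nV.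
  have HO : nbhs x O by exact: open_nbhs_nbhs.
  apply: filterS2 HO (cO x (conj Sx Ox) V nV) => y Oy Vy [Sy _].
  exact: Vy.
move=> o1 o2 c1 c2; apply/subspace_continuousP => x [Sx [inO1 | inO2]].
- exact: glue c1 x Sx inO1.
- exact: glue c2 x Sx inO2.
Qed.

Lemma within_continuous_patch (T U : topologicalType) (S V M : set T)
    (g h : T -> U) :
  open V -> open M -> (forall x, V x -> ~ M x) ->
  {within S `&` V, continuous h} -> {within S `&` M, continuous g} ->
  {within S `&` (V `|` M),
    continuous (fun x => if pselect (M x) then g x else h x)}.
Proof.
move=> oV oM VnM ch cg; apply: (within_continuousU_open oV oM).
- apply: subspace_eq_continuous ch => x; rewrite inE /from_subspace => -[_ Vx].
  by case: pselect => // Mx; case: (VnM x Vx Mx).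
- apply: subspace_eq_continuous cg => x; rewrite inE /from_subspace => -[_ Mx].
  by case: pselect.
Qed.

Lemma setTX_preimage_fst (T V : Type) (A : set T) (I : set V) :
  [set: T] `*` I `&` fst @^-1` A = A `*` I.
Proof. by apply/seteqP; split => -[x t] /=; [move=> [[_ ?] ?] | move=> [? ?]]. Qed.

Lemma open_setD_closure (T : topologicalType) (U M : set T) :
  open U -> open (U `\` closure M).
Proof.
by move=> oU; rewrite setDE; apply: openI oU _; exact/closed_openC/closed_closure.
Qed.

Lemma setD_closure_disjoint (T : topologicalType) (U M : set T) x :
  (U `\` closure M) x -> ~ M x.
Proof. by move=> [_ nclx] /subset_closure. Qed.

Lemma unitI1 : unitI 1.
Proof. by rewrite /unitI /= in_itv /= lexx ler01. Qed.

Lemma unitI_oneminus (t : R) : unitI t -> unitI (1 - t).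
Proof. by rewrite /unitI /= !in_itv /= => /andP[h1 h2]; apply/andP; split; lra. Qed.

Lemma normal_space_shrink (T : topologicalType) (A N : set T) :
  normal_space T -> closed A -> open N -> A `<=` N ->
  exists M : set T, [/\ open M, A `<=` M & closure M `<=` N].
Proof.
move=> nT clA oN AN.
have nbhsN : set_nbhs A N by apply/set_nbhsP; exists N; split.
have [C /set_nbhsP [M [oM AM MC]] clCN] := nT _ clA N nbhsN.
by exists M; split => //; exact: subset_trans (closureS MC) clCN.
Qed.

Lemma least_nat_mono (P Q : nat -> Prop) :
  (forall n, Q n -> P n) -> enat_le (least_nat P) (least_nat Q).
Proof.
move=> QP; rewrite /least_nat.
case: pselect => [hP | nP]; case: pselect => [hQ | nQ] //=.
- case: ex_minnP => m Pm minP; case: ex_minnP => k /asboolP Qk _.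
  by apply: minP; apply/asboolP; exact: QP.
- by case: hQ => k /asboolP Qk; apply: nP; exists k; apply/asboolP; exact: QP.
Qed.

Lemma least_nat_succ (P Q : nat -> Prop) :
  (forall n, P n -> Q n.+1) -> enat_le (least_nat Q) (enat_succ (least_nat P)).
Proof.
move=> PQ; rewrite /least_nat.
case: pselect => [hQ | nQ]; case: pselect => [hP | nP] //=.
- case: ex_minnP => m Qm minQ; case: ex_minnP => k /asboolP Pk _.
  by apply: minQ; apply/asboolP; exact: PQ.
- by case: hP => k /asboolP Pk; apply: nQ; exists k.+1; apply/asboolP; exact: PQ.
Qed.

Section SectionDeformation.
Variables (B X : topologicalType) (pX : X -> B) (sX : B -> X).
Hypothesis pointedX : fib_pointed_space pX sX.
Hypothesis cofib_sX : fib_cofibration id pX sX.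

(* The homotopy extension property of [sX], with target the subspace
   [X * 0 `|` range sX * R] of [X * R] fibred over B through [X]. *)
Lemma fib_cofibration_cylinder_retraction :
  exists r : X * R -> X * R,
    [/\ {within [set: X] `*` unitI, continuous r},
        (forall p, (r p).2 = 0 \/ range sX (r p).1),
        (forall x t, unitI t -> pX (r (x, t)).1 = pX x),
        (forall x, r (x, 0) = (x, 0)) &
        (forall b t, unitI t -> r (sX b, t) = (sX b, t))].
Proof.
case: pointedX => cpX [csX psX]; case: cofib_sX => _ hep.
pose Cyl : set (X * R) := [set p | p.2 = 0 \/ range sX p.1].
pose pY (y : set_type Cyl) := pX (val y).1.
pose g (x : X) : set_type Cyl :=
  @SigSub _ _ Cyl (x, 0) (mem_set (or_introl erefl : Cyl (x, 0))).
pose H (bt : B * R) : set_type Cyl := @SigSub _ _ Cyl (sX bt.1, bt.2)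
  (mem_set (or_intror (imageT sX bt.1) : Cyl (sX bt.1, bt.2))).
have cval : continuous (fun y : set_type Cyl => val y).
  by rewrite -set_valE; exact: initial_continuous.
have cpY : continuous pY.
  apply: (continuous_comp_fun (f := fun y : set_type Cyl => (val y).1)) => //.
  exact: continuous_comp_fun cval (@continuous_fst _ _).
have cg : continuous g.
  apply: continuous_comp_initial; rewrite set_valE.
  by apply: continuous_pair => [x|]; [exact: cvg_id | exact: cst_continuous].
have cH : continuous H.
  apply: continuous_comp_initial; rewrite set_valE.
  apply: (continuous_pair (f := sX \o fst)); last exact: continuous_snd.
  exact: continuous_comp_fun (@continuous_fst _ _) csX.
have [Ht [cHt fHt Ht0 Htj]] := hep _ pY cpY g (conj cg (fun=> erefl)) H
  (continuous_subspaceT cH) (fun b _ _ => psX b) (fun b => @val_inj _ _ _ (H (b, 0)) (g (sX b)) erefl).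
exists (fun p => val (Ht p)); split => //.
- apply: (within_continuous_comp (A := setT)) cHt _ _ => //.
  exact: continuous_subspaceT cval.
- by move=> p; have := valP (Ht p); rewrite inE.
- by move=> x; rewrite Ht0.
- by move=> b t It; rewrite Htj.
Qed.

Record section_deformation (N : set X) (D : X * R -> X) : Prop := {
  section_deformation_open : open N;
  section_deformation_section : forall b, N (sX b);
  section_deformation_homotopy : fib_homotopic_incl_on pX id N (sX \o pX) D;
  section_deformation_stationary : forall b t, unitI t -> D (sX b, t) = sX b
}.

(* [N] is where the retraction pushes the top level [t = 1] off [X * 0]; the
   deformation runs the retraction backwards in time and projects to [X]. *)
Lemma fib_cofibration_section_deformation :
  exists N D, section_deformation N D.
Proof.
have psX := proj2 (proj2 pointedX).
have [r [cr rCyl fr r0 rs]] := fib_cofibration_cylinder_retraction.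
have cr1 : continuous (fun x => (r (x, 1)).2).
  apply/continuous_subspace_setT.
  apply: (within_continuous_comp (A := [set: X] `*` unitI) (phi := fun x => (x, 1))
    (h := fun p => (r p).2)).
  - apply: continuous_subspaceT.
    by apply: continuous_pair => [x|]; [exact: cvg_id | exact: cst_continuous].
  - by move=> x _; split => //; exact: unitI1.
  - apply: (within_continuous_comp (A := setT) (h := snd)) cr _ _ => //.
    exact/continuous_subspaceT/continuous_snd.
exists [set x | 0 < (r (x, 1)).2], (fun p => (r (p.1, 1 - p.2)).1); split.
- exact: (continuousP _).1 cr1 _ (@open_gt _ 0).
- by move=> b /=; rewrite rs ?ltr01 //; exact: unitI1.
- split.
  + apply: (within_continuous_comp (A := [set: X] `*` unitI)
      (phi := fun p : X * R => (p.1, 1 - p.2)) (h := fun p => (r p).1)).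
    * apply/continuous_subspaceT/continuous_pair; first exact: continuous_fst.
      exact: continuous_comp_fun (@continuous_snd _ _) continuous_oneminus.
    * by move=> [x t] [_ It]; split => //; exact: unitI_oneminus.
    * apply: (within_continuous_comp (A := setT) (h := fst)) cr _ _ => //.
      exact/continuous_subspaceT/continuous_fst.
  + by move=> x t _ It /=; rewrite fr //; exact: unitI_oneminus.
  + move=> x /= Nx; rewrite subr0.
    case: (rCyl (x, 1)) => [r0x | [b _ eb]]; first by move: Nx; rewrite r0x ltxx.
    by rewrite -(fr x 1 unitI1) -eb psX.
  + by move=> x _ /=; rewrite subrr r0.
- by move=> b t It /=; rewrite rs //; exact: unitI_oneminus.
Qed.

End SectionDeformation.

Section LocalSections.
Variables (B E X : topologicalType) (pE : E -> B) (sE : B -> E).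
Variables (pX : X -> B) (sX : B -> X) (f : E -> X).

Definition local_section (U : set X) : Prop :=
  exists s : X -> E,
    fib_map_on pX pE U s /\ exists H, fib_homotopic_incl_on pX f U s H.

Definition pointed_local_section (U : set X) : Prop :=
  exists s : X -> E,
    [/\ fib_map_on pX pE U s,
        (forall b, s (sX b) = sE b) &
        exists H, fib_homotopic_incl_on pX f U s H /\
                  (forall b t, unitI t -> H (sX b, t) = sX b)].

Lemma pointed_local_section_local (U : set X) :
  pointed_local_section U -> local_section U.
Proof. by move=> [s [fs _ [H [hH _]]]]; exists s; split => //; exists H. Qed.

Lemma secatBB_le_secatB_le (n : nat) :
  secatBB_le pE pX sE sX f n -> secatB_le pE pX f n.
Proof.
move=> [U [oU covU _ secU]]; exists U; split => // i iln.
exact/pointed_local_section_local/secU.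
Qed.

Hypothesis pointedE : fib_pointed_space pE sE.
Hypothesis pointedX : fib_pointed_space pX sX.
Hypothesis f_pointed : forall b, f (sE b) = sX b.

Lemma section_deformation_pointed_local_section (N V : set X)
    (D : X * R -> X) :
  section_deformation pX sX N D -> V `<=` N -> pointed_local_section V.
Proof.
case=> _ _ [cD fD D0 D1] Ds VN.
case: pointedE => cpE [csE psE]; case: pointedX => cpX [_ psX].
exists (sE \o pX); split.
- split; first exact/continuous_subspaceT/(continuous_comp_fun cpX csE).
  by move=> x _ /=; rewrite psE.
- by move=> b /=; rewrite psX.
- exists D; split => //; split.
  + by apply: continuous_subspaceW cD => -[x t] [/VN ? ?].
  + by move=> x t /VN; exact: fD.
  + by move=> x /VN /D0 /= ->; rewrite f_pointed.
  + by move=> x /VN /D1.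
Qed.

Section Patch.
Variables (N M : set X) (D : X * R -> X).
Hypotheses (deformN : section_deformation pX sX N D) (oM : open M).
Hypotheses (M_section : forall b, M (sX b)) (MN : M `<=` N).

(* Outside [closure M] keep the given section and homotopy, on [M] use
   [sE \o pX] and the deformation: two disjoint open pieces. *)
Lemma local_section_pointed_patch (U : set X) :
  open U -> local_section U -> pointed_local_section ((U `\` closure M) `|` M).
Proof.
move=> oU [s [[cs fs] [H [cH fH H0 H1]]]].
have [sM [[csM fsM] sMs [DM [[cDM fDM DM0 DM1] DMs]]]] :=
  section_deformation_pointed_local_section deformN MN.
have oV := open_setD_closure M oU; have VnM := @setD_closure_disjoint _ U M.
exists (fun x => if pselect (M x) then sM x else s x); split.
- split.
  + rewrite -[_ `|` _]setTI; apply: within_continuous_patch => //; rewrite setTI.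
    * by apply: continuous_subspaceW cs => x [].
    * exact: csM.
  + move=> x Vx; case: pselect => [/fsM // | nMx].
    by case: Vx => [[Ux _] | //]; exact: fs.
- move=> b; case: pselect => [Mb | nM]; first exact: sMs.
  by case: (nM (M_section b)).
- exists (fun p => if pselect (M p.1) then DM p else H p); split; first split.
  + rewrite -setTX_preimage_fst; apply: within_continuous_patch.
    * exact: (continuousP _).1 (@continuous_fst X R) _ oV.
    * exact: (continuousP _).1 (@continuous_fst X R) _ oM.
    * by move=> [x t] /VnM.
    * by rewrite setTX_preimage_fst; apply: continuous_subspaceW cH => -[x t] [[? _] ?].
    * by rewrite setTX_preimage_fst.
  + move=> x t Vx It /=; case: pselect => [Mx | nMx]; first exact: fDM.
    by case: Vx => [[Ux _] | //]; exact: fH.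
  + move=> x Vx /=; case: pselect => [/DM0 // | nMx].
    by case: Vx => [[Ux _] | //]; exact: H0.
  + move=> x Vx /=; case: pselect => [/DM1 // | nMx].
    by case: Vx => [[Ux _] | //]; exact: H1.
  + move=> b t It /=; case: pselect => [Mb | nM]; first exact: DMs.
    by case: (nM (M_section b)).
Qed.

End Patch.

Lemma secatB_le_secatBB_le_succ (n : nat) :
  fib_well_pointed pX sX -> normal_space X ->
  secatB_le pE pX f n -> secatBB_le pE pX sE sX f n.+1.
Proof.
move=> [cofib cl_sX] nX [U [oU covU secU]].
have [N [D deformN]] := fib_cofibration_section_deformation pointedX cofib.
have [oN N_section _ _] := deformN.
have [M [oM sXM clMN]] : exists M : set X,
    [/\ open M, range sX `<=` M & closure M `<=` N].
  by apply: normal_space_shrink => // _ [b _ <-].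
have MN : M `<=` N := subset_trans (@subset_closure _ M) clMN.
have M_section b : M (sX b) by apply: sXM; exact: imageT.
exists (fun i => if (i <= n)%N then (U i `\` closure M) `|` M else N); split.
- move=> i _; case: ifP => [iln | //].
  by apply: openU oM; apply: open_setD_closure; exact: oU.
- move=> x; have [/clMN Nx | nclx] := pselect (closure M x).
    by exists n.+1 => //; rewrite ltnn.
  by have [i iln Uix] := covU x; exists i; [exact: leqW | rewrite iln; left].
- by move=> i _ b; case: ifP => _; [right |].
- move=> i _; case: ifP => [iln | _].
  + exact: (local_section_pointed_patch deformN oM M_section MN (oU i iln)
      (secU i iln)).
  + exact: (section_deformation_pointed_local_section deformN (@subset_refl _ N)).
Qed.

End LocalSections.

Theorem theorem4p1 (B E X : topologicalType)
    (pE : E -> B) (sE : B -> E) (pX : X -> B) (sX : B -> X) (f : E -> X) :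
  fib_pointed_space pE sE ->
  fib_pointed_space pX sX ->
  fib_map pE pX f ->
  (forall b, f (sE b) = sX b) ->
  fib_well_pointed pE sE ->
  fib_well_pointed pX sX ->
  ((normal_space E /\ normal_space X) \/
   (closed_fib_cofibration pE pX f /\ normal_space X)) ->
  enat_le (secatB pE pX f) (secatBB pE pX sE sX f) /\
  enat_le (secatBB pE pX sE sX f) (enat_succ (secatB pE pX f)).
Proof.
move=> pointedE pointedX _ f_pointed _ wellX normal.
have nX : normal_space X by case: normal => -[].
split.
- by apply: least_nat_mono => n; exact: secatBB_le_secatB_le.
- apply: least_nat_succ => n.
  exact: secatB_le_secatBB_le_succ pointedE pointedX f_pointed n wellX nX.
Qed.
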